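(* A quantum score $S=(s,\mu)$ on $\mathcal X=\mathbb C^n$ is truthful if and only if there exist a convex function $F:\mathrm{Dens}(\mathcal X)\to\mathbb R$ and a selection of extended subgradients $\{d_\rho\in\overline{\partial}F(\rho)\}_{\rho\in\mathrm{Dens}(\mathcal X)}$ such that for all $\rho,\rho'\in\mathrm{Dens}(\mathcal X)$, $$S(\rho';\rho)=F(\rho')+\langle d_{\rho'},\rho-\rho'\rangle.$$ Moreover, $S$ is strictly truthful if and only if such a representation exists with $F$ strictly convex.
   Context: Let $\mathcal X=\mathbb C^n$. $\mathrm{Herm}(\mathcal X)$ is the real vector space of Hermitian $n\times n$ matrices with inner product $\langle X,Y\rangle=\mathrm{Tr}(X^*Y)$; $\mathrm{Pos}(\mathcal X)$ the positive semidefinite ones; $\mathrm{Dens}(\mathcal X)=\{\rho\in\mathrm{Pos}(\mathcal X):\mathrm{Tr}\rho=1\}$ (density matrices). A measurement with finite outcome set $\mathcal Y\subseteq\mathbb N$ is a family $\mu=\{\mu_y\}_{y\in\mathcal Y}$ with $\mu_y\in\mathrm{Pos}(\mathcal X)$ and $\sum_y\mu_y=I$; it induces the distribution $\langle\mu,\rho\rangle\in\Delta_{\mathcal Y}$ with $\langle\mu,\rho\rangle_y=\langle\mu_y,\rho\rangle$. $\mathrm{Meas}(\mathcal X)$ is the set of all measurements. Let $\overline{\mathbb R}=\mathbb R\cup\{\pm\infty\}$, with $0\cdot(\pm\infty)=0$. A quantum score is a pair $S=(s,\mu)$ with $s:\mathrm{Dens}(\mathcal X)\times\mathbb N\to\overline{\mathbb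 R}$ and $\mu:\mathrm{Dens}(\mathcal X)\to\mathrm{Meas}(\mathcal X)$, where $\mu(\rho')$ has outcome set $\mathcal Y(\rho')$; its expected score is $S(\rho';\rho)=\sum_{y\in\mathcal Y(\rho')}\langle\mu(\rho')_y,\rho\rangle s(\rho',y)$. $S$ is truthful if $S(\rho;\rho)\ge S(\rho';\rho)$ for all $\rho,\rho'$, and strictly truthful if the inequality is strict whenever $\rho'\ne\rho$. A function $\ell:\mathcal V\to\overline{\mathbb R}$ on a real vector space is extended linear if $\ell(\alpha v)=\alpha\ell(v)$ for all $\alpha\in\mathbb R$, and $\ell(v+v')=\ell(v)+\ell(v')$ whenever $\{\ell(v),\ell(v')\}\ne\{\infty,-\infty\}$; write $\langle d,x\rangle$ for $d(x)$. For a convex $G:C\to\mathbb R$ ($C$ convex, $G=+\infty$ outside $C$), an extended subgradient of $G$ at $x\in C$ is an extended linear $d$ with $G(x')\ge G(x)+\langle d,x'-x\rangle$ for all $x'\in C$; the set of these is $\overline\partial G(x)$. A selection of extended subgradients is a family $\{d_x\in\overline\partial G(x)\}_{x\in C}$ such that $\langle d_x,z-x\rangle\in\mathbb R\cup\{-\infty\}$ for all $x,z\in C$.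
   Formalization: Both equivalences assume that S(ρ;ρ) is finite for every density matrix ρ, and in the expected score a sum containing both +∞ and −∞ equals −∞. Apart from conventions, each condition added here is assumed in the paper as well or is needed for the statement above to hold. *)

From HB Require Import structures.
From mathcomp Require Import all_boot all_order all_algebra.
From mathcomp Require Import complex.
From mathcomp Require Import reals constructive_ereal.

Set Implicit Arguments.
Unset Strict Implicit.
Unset Printing Implicit Defensive.

Import Order.TTheory GRing.Theory Num.Theory.
Local Open Scope ring_scope.

Section QuantumScores.
Variables (R : realType) (n : nat).

Local Notation Mx := 'M[R[i]]_n.

Definition adjmx (A : Mx) : Mx := (map_mx (@conjc R) A)^T.

Definition herm (A : Mx) : Prop := adjmx A = A.

(* real scalar action on Herm(X) (Herm(X) is a real vector space) *)
Definition rscale (a : R) (A : Mx) : Mx := (Complex a 0) *: A.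

(* <X,Y> = Tr(X^* Y); it is real for Hermitian X, Y, and we take its real part *)
Definition hip (A B : Mx) : R := @complex.Re R (\tr (adjmx A *m B)).

Definition psd (A : Mx) : Prop :=
  herm A /\ forall v : 'cV[R[i]]_n, 0 <= ((map_mx (@conjc R) v)^T *m A *m v) 0 0.

Definition dens (rho : Mx) : Prop := psd rho /\ \tr rho = 1.

(* A measurement with finite outcome set Y ⊆ N: outcomes Y (duplicate-free list),
   effects mu y (only the values on Y matter). *)
Definition is_meas (Y : seq nat) (mu : nat -> Mx) : Prop :=
  uniq Y /\ (forall y, y \in Y -> psd (mu y)) /\ \sum_(y <- Y) mu y = 1%:M.

(* A quantum score S = (s, mu): s : Dens x N -> \bar R,
   mu : Dens -> Meas, where mu(rho') has outcome set Y rho' and effects M rho'. *)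
Definition quantum_score (Y : Mx -> seq nat) (M : Mx -> nat -> Mx) : Prop :=
  forall rho', dens rho' -> is_meas (Y rho') (M rho').

(* expected score S(rho'; rho) = sum_{y in Y(rho')} <mu(rho')_y, rho> s(rho', y)
   (with 0 * (+-oo) = 0, mathcomp's convention) *)
Definition exp_score (s : Mx -> nat -> \bar R) (Y : Mx -> seq nat)
    (M : Mx -> nat -> Mx) (rho' rho : Mx) : \bar R :=
  (\sum_(y <- Y rho') ((hip (M rho' y) rho)%:E * s rho' y))%E.

Definition truthful s Y M : Prop :=
  forall rho rho', dens rho -> dens rho' ->
    (exp_score s Y M rho' rho <= exp_score s Y M rho rho)%E.

Definition strictly_truthful s Y M : Prop :=
  forall rho rho', dens rho -> dens rho' -> rho' <> rho ->
    (exp_score s Y M rho' rho < exp_score s Y M rho rho)%E.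

Definition ext_linear (d : Mx -> \bar R) : Prop :=
  (forall (a : R) (X : Mx), herm X -> d (rscale a X) = (a%:E * d X)%E) /\
  (forall X X' : Mx, herm X -> herm X' ->
     ~ (d X = +oo%E /\ d X' = -oo%E) -> ~ (d X = -oo%E /\ d X' = +oo%E) ->
     d (X + X') = (d X + d X')%E).

Definition convex_on_dens (F : Mx -> R) : Prop :=
  forall (rho1 rho2 : Mx) (t : R), dens rho1 -> dens rho2 -> 0 <= t <= 1 ->
    F (rscale t rho1 + rscale (1 - t) rho2) <= t * F rho1 + (1 - t) * F rho2.

Definition strictly_convex_on_dens (F : Mx -> R) : Prop :=
  forall (rho1 rho2 : Mx) (t : R), dens rho1 -> dens rho2 -> rho1 <> rho2 ->
    0 < t < 1 ->
    F (rscale t rho1 + rscale (1 - t) rho2) < t * F rho1 + (1 - t) * F rho2.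

Definition ext_subgrad (F : Mx -> R) (x : Mx) (d : Mx -> \bar R) : Prop :=
  ext_linear d /\
  forall x', dens x' -> ((F x)%:E + d (x' - x)%R <= (F x')%:E)%E.

Definition subgrad_selection (F : Mx -> R) (d : Mx -> Mx -> \bar R) : Prop :=
  (forall x, dens x -> ext_subgrad F x (d x)) /\
  (forall x z, dens x -> dens z -> d x (z - x) <> +oo%E).

Definition represents s Y M (F : Mx -> R) (d : Mx -> Mx -> \bar R) : Prop :=
  forall rho rho', dens rho -> dens rho' ->
    exp_score s Y M rho' rho = ((F rho')%:E + d rho' (rho - rho')%R)%E.

Definition regular_score s Y M : Prop :=
  forall rho, dens rho -> exp_score s Y M rho rho \is a fin_num.

End QuantumScores.

From HB Require Import structures.
From mathcomp Require Import all_boot all_order all_algebra.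
From mathcomp Require Import complex.
From mathcomp Require Import reals constructive_ereal.
From mathcomp Require Import sesquilinear spectral.
From mathcomp Require Import ring lra.

(* If S is truthful, take F(rho) := S(rho; rho) and read the subgradient off
   the score itself: for a fixed report rho', S(rho'; .) is the extended
   linear functional -oo <A, .> + +oo <B, .> + <C, .>, where A and B add up
   the effects of the outcomes scored -oo and +oo and C = sum_y s(rho', y) mu_y;
   this uses that effects have nonnegative overlap with densities.
   Regularity forces <A, rho'> = <B, rho'> = 0, which yields the affine
   representation, and truthfulness becomes the subgradient inequality.
   Conversely a representation turns truthfulness into the subgradient
   inequality.  Any F with a selection of extended subgradients is convex: at
   a convex combination the two relevant subgradient values are finite and
   cancel.  The same computation with strict inequalities gives strict
   convexity, and conversely strict convexity tested at a midpoint makes the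
   subgradient inequalities strict. *)

Set Implicit Arguments.
Unset Strict Implicit.
Unset Printing Implicit Defensive.

Import Order.TTheory GRing.Theory Num.Theory.
Local Open Scope ring_scope.
Local Open Scope sesquilinear_scope.

Local Notation mix t r1 r2 := (rscale t r1 + rscale (1 - t) r2).

Section LexicographicExtendedValue.
Variable R : realType.
Implicit Types a b c f w : R.

(* The extended real "-oo * a + +oo * b + f": the sign of [a] decides first,
   then the sign of [b]; [f] only matters when [a = b = 0]. *)
Definition lexe a b f : \bar R :=
  if 0 < a then -oo%E else if a < 0 then +oo%E else
  if 0 < b then +oo%E else if b < 0 then -oo%E else f%:E.

Variant lexe_spec a b f : \bar R -> Type :=
  | LexeNy of 0 < a : lexe_spec a b f -oo
  | LexeyN of a < 0 : lexe_spec a b f +oo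
  | Lexey of a = 0 & 0 < b : lexe_spec a b f +oo
  | LexeNyN of a = 0 & b < 0 : lexe_spec a b f -oo
  | LexeFin of a = 0 & b = 0 : lexe_spec a b f f%:E.

Lemma lexeP a b f : lexe_spec a b f (lexe a b f).
Proof.
by rewrite /lexe; case: ltgtP => ha; [| |case: ltgtP => hb]; constructor.
Qed.

Lemma lexe00 f : lexe 0 0 f = f%:E.
Proof. by rewrite /lexe ltxx. Qed.

Lemma lexe_fin_num a b f : (lexe a b f \is a fin_num) = (a == 0) && (b == 0).
Proof.
case: lexeP => [h|h|-> h|-> h|-> ->]; rewrite ?eqxx //.
all: by rewrite ?(gt_eqF h) ?(lt_eqF h).
Qed.

Lemma lexeDr c a b f : lexe a b (c + f) = (c%:E + lexe a b f)%E.
Proof.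
case: (lexeP a b f) => *; case: (lexeP a b (c + f)) => *;
  try (exfalso; lra); by rewrite ?addeNy ?addey.
Qed.

Lemma lexeZ c a b f : lexe (c * a) (c * b) (c * f) = (c%:E * lexe a b f)%E.
Proof.
case: (ltgtP c 0) => hc; last by rewrite hc !mul0r mul0e lexe00.
all: have hcE := hc; rewrite -lte_fin in hcE.
all: case: (lexeP (c * a) (c * b) (c * f)) => *; case: (lexeP a b f) => *;
  rewrite ?(lt0_muleNy hcE) ?(lt0_muley hcE) ?(gt0_muleNy hcE) ?(gt0_muley hcE) //;
  try (exfalso; nra).
Qed.

Lemma lexeD a1 b1 f1 a2 b2 f2 :
  ~ (lexe a1 b1 f1 = +oo /\ lexe a2 b2 f2 = -oo)%E ->
  ~ (lexe a1 b1 f1 = -oo /\ lexe a2 b2 f2 = +oo)%E ->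
  lexe (a1 + a2) (b1 + b2) (f1 + f2) = (lexe a1 b1 f1 + lexe a2 b2 f2)%E.
Proof.
case: (lexeP a1 b1 f1); case: (lexeP a2 b2 f2);
  case: (lexeP (a1 + a2) (b1 + b2) (f1 + f2)) => *;
  try (exfalso; lra); try match goal with H : ~ _ |- _ => by case: H end.
all: by rewrite ?addNye ?addeNy ?addye ?addey.
Qed.

Lemma lexeD_ge0 a1 b1 f1 a2 b2 f2 :
  0 <= a1 -> 0 <= b1 -> 0 <= a2 -> 0 <= b2 ->
  lexe (a1 + a2) (b1 + b2) (f1 + f2) = (lexe a1 b1 f1 + lexe a2 b2 f2)%E.
Proof.
move=> *; case: (lexeP a1 b1 f1) => *; case: (lexeP a2 b2 f2) => *;
  case: (lexeP (a1 + a2) (b1 + b2) (f1 + f2)) => *;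
  try (exfalso; lra); by rewrite ?addNye ?addeNy ?addye ?addey.
Qed.

Lemma mule_lexe w (v : \bar R) : 0 <= w ->
  (w%:E * v)%E = lexe (w *+ (v == -oo%E)) (w *+ (v == +oo%E)) (fine v * w).
Proof.
rewrite le_eqVlt => /predU1P[<-|w0]; first by rewrite mul0e !mul0rn mulr0 lexe00.
case: v => [x||] /=; rewrite ?mulr0n ?mulr1n ?mul0r.
- by rewrite lexe00 mulrC.
- by rewrite gt0_muley ?lte_fin // /lexe ltxx w0.
- by rewrite gt0_muleNy ?lte_fin // /lexe w0.
Qed.

Lemma sum_mule_lexe (I : eqType) (l : seq I) (w : I -> R) (v : I -> \bar R) :
  {in l, forall i, 0 <= w i} ->
  (\sum_(i <- l) (w i)%:E * v i)%E =
  lexe (\sum_(i <- l | v i == -oo%E) w i) (\sum_(i <- l | v i == +oo%E) w i)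
       (\sum_(i <- l) fine (v i) * w i).
Proof.
elim: l => [|i l IH] w0; first by rewrite !big_nil lexe00.
have w0l : {in l, forall j, 0 <= w j} by move=> j jl; apply: w0; rewrite inE jl orbT.
have sum_ge0 (P : pred I) : 0 <= \sum_(j <- l | P j) w j.
  by rewrite big_seq_cond; apply: sumr_ge0 => j /andP[/w0l].
rewrite !big_cons IH // mule_lexe ?w0 ?mem_head //.
rewrite -lexeD_ge0 ?sum_ge0 ?mulrn_wge0 ?w0 ?mem_head //.
by case: (v i) => [x||] /=; rewrite ?add0r.
Qed.

End LexicographicExtendedValue.

Section HermitianMatrices.
Variables (R : realType) (n : nat).
Local Notation Mx := 'M[R[i]]_n.
Implicit Types (a : R) (A B C X : Mx).

Lemma ReD (x y : R[i]) : complex.Re (x + y) = complex.Re x + complex.Re y.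
Proof. by case: x; case: y. Qed.

Lemma ReN (x : R[i]) : complex.Re (- x) = - complex.Re x.
Proof. by case: x. Qed.

Lemma ReZ a (x : R[i]) : complex.Re (Complex a 0 * x) = a * complex.Re x.
Proof. by case: x => u v /=; rewrite mul0r subr0. Qed.

Lemma adjmxE A : adjmx A = A ^t* .
Proof. by rewrite /adjmx map_trmx. Qed.

Lemma adjmxD A B : adjmx (A + B) = adjmx A + adjmx B.
Proof. by rewrite /adjmx map_mxD linearD. Qed.

Lemma adjmxN A : adjmx (- A) = - adjmx A.
Proof. by rewrite /adjmx map_mxN linearN. Qed.

Lemma adjmxZ a A : adjmx (rscale a A) = rscale a (adjmx A).
Proof. by rewrite /adjmx /rscale map_mxZ linearZ /= /conjc oppr0. Qed.

Lemma herm0 : herm (0 : Mx).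
Proof. by rewrite /herm /adjmx map_mx0 trmx0. Qed.

Lemma hermD A B : herm A -> herm B -> herm (A + B).
Proof. by rewrite /herm adjmxD => -> ->. Qed.

Lemma hermB A B : herm A -> herm B -> herm (A - B).
Proof. by rewrite /herm adjmxD adjmxN => -> ->. Qed.

Lemma hermZ a A : herm A -> herm (rscale a A).
Proof. by rewrite /herm adjmxZ => ->. Qed.

Lemma dens_herm A : dens A -> herm A.
Proof. by case=> [[]]. Qed.

Lemma hipDr A B C : hip A (B + C) = hip A B + hip A C.
Proof. by rewrite /hip mulmxDr mxtraceD ReD. Qed.

Lemma hipBr A B C : hip A (B - C) = hip A B - hip A C.
Proof. by rewrite /hip mulmxBr mxtraceD raddfN /= ReD ReN. Qed.

Lemma hipZr a A B : hip A (rscale a B) = a * hip A B.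
Proof. by rewrite /hip /rscale -scalemxAr mxtraceZ ReZ. Qed.

Lemma hipDl A B C : hip (A + B) C = hip A C + hip B C.
Proof. by rewrite /hip adjmxD mulmxDl mxtraceD ReD. Qed.

Lemma hip0l A : hip 0 A = 0.
Proof. by rewrite /hip /adjmx map_mx0 trmx0 mul0mx mxtrace0. Qed.

Lemma hip_suml (I : Type) (l : seq I) (P : pred I) (F : I -> Mx) X :
  hip (\sum_(i <- l | P i) F i) X = \sum_(i <- l | P i) hip (F i) X.
Proof.
elim: l => [|i l IH]; first by rewrite !big_nil hip0l.
by rewrite !big_cons; case: (P i); rewrite ?hipDl IH.
Qed.

Lemma hipZl a A B : hip (rscale a A) B = a * hip A B.
Proof. by rewrite /hip adjmxZ /rscale -scalemxAl mxtraceZ ReZ. Qed.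

Lemma psd_conj_diag_ge0 (P X : Mx) k : psd X -> 0 <= (P *m X *m P ^t*) k k.
Proof.
case=> _ /(_ (col k (P ^t*))); congr (0 <= _).
rewrite !mxE; apply: eq_bigr => l _; rewrite !mxE; congr (_ * _).
by apply: eq_bigr => m _; rewrite !mxE conjcK.
Qed.

Lemma hip_psd_ge0 A B : psd A -> psd B -> 0 <= hip A B.
Proof.
move=> psdA psdB; have normalB : B \is normalmx.
  by rewrite qualifE -adjmxE psdB.1.
set P := spectralmx B; set D := spectral_diag B.
have unitaryP : P \is unitarymx by exact: spectral_unitarymx.
have PPt : P *m P ^t* = 1%:M by apply/unitarymxP.
have diagB : B = P ^t* *m diag_mx D *m P.
  by rewrite -invmx_unitary //; exact/orthomx_spectralP.
have DE k : D 0 k = (P *m B *m P ^t*) k k.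
  by rewrite diagB !mulmxA PPt mul1mx -mulmxA PPt mulmx1 mxE eqxx mulr1n.
rewrite /hip psdA.1 diagB !mulmxA mxtrace_mulC !mulmxA.
suff : 0 <= \tr (P *m A *m P ^t* *m diag_mx D) by rewrite lecE => /andP[].
rewrite mul_mx_diag; apply: sumr_ge0 => k _; rewrite mxE DE.
by apply: mulr_ge0; exact: psd_conj_diag_ge0.
Qed.

End HermitianMatrices.

Section Mixtures.
Variables (R : realType) (n : nat).
Local Notation Mx := 'M[R[i]]_n.
Implicit Types (a t : R) (X : Mx).

Lemma rscaleE a X : rscale a X = a%:C%C *: X.
Proof. by []. Qed.

Lemma rscale0 X : rscale 0 X = 0.
Proof. by rewrite rscaleE rmorph0 scale0r. Qed.

Lemma rscale_eq0 a X : (rscale a X == 0) = (a == 0) || (X == 0).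
Proof. by rewrite rscaleE scalemx_eq0 (inj_eq (@complexI _)). Qed.

Lemma mix_subl t (r1 r2 : Mx) :
  mix t r1 r2 - r1 = rscale (1 - t) (r2 - r1).
Proof. by apply/matrixP => i j; rewrite !rscaleE !mxE rmorphB rmorph1; ring. Qed.

Lemma mix_subr t (r1 r2 : Mx) :
  mix t r1 r2 - r2 = rscale t (r1 - r2).
Proof. by apply/matrixP => i j; rewrite !rscaleE !mxE rmorphB rmorph1; ring. Qed.

Lemma mix_cancel t (r1 r2 : Mx) :
  rscale t (r1 - mix t r1 r2) + rscale (1 - t) (r2 - mix t r1 r2) = 0.
Proof. by apply/matrixP => i j; rewrite !rscaleE !mxE rmorphB rmorph1; ring. Qed.

Lemma mix_eql t (r1 r2 : Mx) : t != 1 ->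
  (mix t r1 r2 == r1) = (r2 == r1).
Proof.
by move=> t1; rewrite -subr_eq0 mix_subl rscale_eq0 subr_eq0 eq_sym (negbTE t1) subr_eq0.
Qed.

Lemma mix_eqr t (r1 r2 : Mx) : t != 0 ->
  (mix t r1 r2 == r2) = (r1 == r2).
Proof. by move=> t0; rewrite -subr_eq0 mix_subr rscale_eq0 (negbTE t0) subr_eq0. Qed.

Lemma dens_mix t (r1 r2 : Mx) : dens r1 -> dens r2 -> 0 <= t <= 1 ->
  dens (mix t r1 r2).
Proof.
move=> [[herm1 psd1] tr1] [[herm2 psd2] tr2] /andP[t0 t1].
have realC_ge0 a : 0 <= a -> 0 <= a%:C%C by rewrite lecR.
split; first split.
- by apply: hermD; apply: hermZ.
- move=> v; rewrite mulmxDr mulmxDl !rscaleE -!scalemxAr -!scalemxAl mxE.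
  by apply: addr_ge0; rewrite mxE mulr_ge0 ?psd1 ?psd2 ?realC_ge0 ?subr_ge0.
- by rewrite mxtraceD !rscaleE !mxtraceZ tr1 tr2 !mulr1 -rmorphD addrC subrK.
Qed.

End Mixtures.

Section ExtendedSubgradients.
Variables (R : realType) (n : nat).
Local Notation Mx := 'M[R[i]]_n.
Implicit Types (d : Mx -> \bar R) (X Z : Mx).

Lemma ext_linear0 d : ext_linear d -> d 0 = 0%E.
Proof. by case=> linZ _; rewrite -(rscale0 0) linZ ?mul0e //; exact: herm0. Qed.

Lemma ext_linear_cancel d a b X Z : ext_linear d -> herm X -> herm Z ->
  0 < a -> 0 < b -> d X != +oo%E -> d Z != +oo%E -> rscale a X + rscale b Z = 0 ->
  exists x z, [/\ d X = x%:E, d Z = z%:E & a * x + b * z = 0].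
Proof.
move=> [linZ linD] hX hZ a0 b0 dX dZ abXZ.
have scale_ny c W : 0 < c -> d W != +oo%E -> (c%:E * d W)%E != +oo%E.
  by move=> c0; case: (d W) => [w||] //= _; rewrite gt0_muleNy ?lte_fin.
have nyX := scale_ny _ _ a0 dX; have nyZ := scale_ny _ _ b0 dZ.
have : d (rscale a X + rscale b Z) = (a%:E * d X + b%:E * d Z)%E.
{ rewrite linD; first by rewrite !linZ.
  1,2: by apply: hermZ.
  all: rewrite !linZ //.
  - by case=> /eqP; rewrite (negbTE nyX).
  - by case=> _ /eqP; rewrite (negbTE nyZ). }
rewrite abXZ ext_linear0 //.
have [a0E b0E] : (0 < a%:E)%E /\ (0 < b%:E)%E by rewrite !lte_fin.
case: (d X) dX => [x||] //= _; case: (d Z) dZ => [z||] //= _.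
- by rewrite -!EFinM -EFinD => -[abxz]; exists x, z.
- by rewrite (gt0_muleNy b0E) addeNy.
- by rewrite (gt0_muleNy a0E) addNye.
- by rewrite (gt0_muleNy a0E) addNye.
Qed.

Lemma lexe_hip_ext_linear (A B C : Mx) :
  ext_linear (fun X => lexe (hip A X) (hip B X) (hip C X)).
Proof.
split=> [a X _|X X' _ _]; first by rewrite !hipZr lexeZ.
by rewrite !hipDr; exact: lexeD.
Qed.

End ExtendedSubgradients.

Section SubgradientSelections.
Variables (R : realType) (n : nat).
Local Notation Mx := 'M[R[i]]_n.
Variables (F : Mx -> R) (d : Mx -> Mx -> \bar R).
Hypothesis sel : subgrad_selection F d.

Definition strict_subgrad_ineq :=
  forall r r' : Mx, dens r -> dens r' -> r' <> r ->
    ((F r')%:E + d r' (r - r') < (F r)%:E)%E.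

Lemma subgrad_selection0 r : dens r -> d r 0 = 0%E.
Proof. by move=> dr; apply: ext_linear0; exact: (sel.1 r dr).1. Qed.

Lemma subgrad_selection_mix t (r1 r2 : Mx) (rt := mix t r1 r2) :
  dens r1 -> dens r2 -> 0 < t < 1 ->
  exists x1 x2, [/\ d rt (r1 - rt) = x1%:E, d rt (r2 - rt) = x2%:E &
                    t * x1 + (1 - t) * x2 = 0].
Proof.
move=> d1 d2 t01; have /andP[t0 t1] := t01.
have drt : dens rt by apply: dens_mix => //; apply/andP; split; exact: ltW.
apply: ext_linear_cancel; rewrite ?subr_gt0 //.
- exact: (sel.1 rt drt).1.
- by apply: hermB; apply: dens_herm.
- by apply: hermB; apply: dens_herm.
- by apply/eqP; exact: sel.2.
- by apply/eqP; exact: sel.2.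
- exact: mix_cancel.
Qed.

Lemma subgrad_selection_convex : convex_on_dens F.
Proof.
move=> r1 r2 t d1 d2 t01; have /andP[t0 t1] := t01.
have [->|tpos] := eqVneq t 0.
  have -> : mix 0 r1 r2 = r2.
    by apply/eqP; rewrite -subr_eq0 mix_subr rscale0.
  by rewrite mul0r add0r subr0 mul1r.
have [->|tlt1] := eqVneq t 1.
  have -> : mix 1 r1 r2 = r1.
    by apply/eqP; rewrite -subr_eq0 mix_subl subrr rscale0.
  by rewrite subrr mul0r addr0 mul1r.
have t01' : 0 < t < 1 by rewrite lt_def tpos t0 lt_neqAle tlt1 t1.
have [x1 [x2 [e1 e2 x12]]] := subgrad_selection_mix d1 d2 t01'.
set rt := mix t r1 r2 in e1 e2 *.
have drt : dens rt by exact: dens_mix.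
have := (sel.1 rt drt).2 r1 d1; have := (sel.1 rt drt).2 r2 d2.
rewrite e1 e2 -!EFinD !lee_fin; nra.
Qed.

Lemma strict_subgrad_strictly_convex :
  strict_subgrad_ineq -> strictly_convex_on_dens F.
Proof.
move=> st r1 r2 t d1 d2 ne t01; have /andP[t0 t1] := t01.
have [x1 [x2 [e1 e2 x12]]] := subgrad_selection_mix d1 d2 t01.
set rt := mix t r1 r2 in e1 e2 *.
have drt : dens rt by apply: dens_mix => //; rewrite !ltW.
have ne1 : rt <> r1 by move/eqP; rewrite mix_eql ?(negbT (lt_eqF t1)) // => /eqP/esym.
have ne2 : rt <> r2 by move/eqP; rewrite mix_eqr ?(negbT (gt_eqF t0)) // => /eqP.
have := st r1 rt d1 drt ne1; have := st r2 rt d2 drt ne2.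
rewrite e1 e2 -!EFinD !lte_fin; nra.
Qed.

Lemma strictly_convex_strict_subgrad :
  strictly_convex_on_dens F -> strict_subgrad_ineq.
Proof.
move=> sc r r' dr dr' ne.
have half : (0 < 1 / 2 :> R) && (1 / 2 < 1 :> R) by apply/andP; split; lra.
set m := mix (1 / 2) r r'.
have dm : dens m by apply: dens_mix => //; apply/andP; split; lra.
have := sc r r' (1 / 2) dr dr' (nesym ne) half; rewrite -/m.
have [[linZ _] subgrad] := sel.1 r' dr'.
have := subgrad m dm; rewrite mix_subr linZ; last by apply: hermB; exact: dens_herm.
move: (sel.2 r' r dr' dr); case: (d r' (r - r')) => [x||] // _.
- by rewrite -EFinM -EFinD !lee_fin lte_fin; lra.
- by rewrite addeNy ltNye.
Qed.

End SubgradientSelections.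

Section Representations.
Variables (R : realType) (n : nat).
Local Notation Mx := 'M[R[i]]_n.
Variables (s : Mx -> nat -> \bar R) (Y : Mx -> seq nat) (M : Mx -> nat -> Mx).

Lemma strictly_truthful_truthful : strictly_truthful s Y M -> truthful s Y M.
Proof.
move=> st r r' dr dr'; have [->|ne] := eqVneq r' r; first by [].
by apply/ltW/st => // /eqP; rewrite (negbTE ne).
Qed.

Variables (F : Mx -> R) (d : Mx -> Mx -> \bar R).
Hypotheses (sel : subgrad_selection F d) (rep : represents s Y M F d).

Lemma represents_diag r : dens r -> exp_score s Y M r r = (F r)%:E.
Proof. by move=> dr; rewrite rep // subrr (subgrad_selection0 sel) // adde0. Qed.

Lemma represents_truthful : truthful s Y M.
Proof.
by move=> r r' dr dr'; rewrite rep // represents_diag //; exact: (sel.1 r' dr').2.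
Qed.

Lemma represents_strictly_truthful :
  strictly_truthful s Y M <-> strict_subgrad_ineq F d.
Proof.
by split=> st r r' dr dr' ne; have := st r r' dr dr' ne; rewrite rep // represents_diag.
Qed.

End Representations.

Section ScoreSubgradient.
Variables (R : realType) (n : nat).
Local Notation Mx := 'M[R[i]]_n.
Variables (s : Mx -> nat -> \bar R) (Y : Mx -> seq nat) (M : Mx -> nat -> Mx).
Hypothesis QS : quantum_score Y M.

Definition ninf_effect r' := \sum_(y <- Y r' | s r' y == -oo%E) M r' y.
Definition pinf_effect r' := \sum_(y <- Y r' | s r' y == +oo%E) M r' y.
Definition score_observable r' := \sum_(y <- Y r') rscale (fine (s r' y)) (M r' y).

Definition score_grad r' X :=
  lexe (hip (ninf_effect r') X) (hip (pinf_effect r') X) (hip (score_observable r') X).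

Definition score_value r := fine (exp_score s Y M r r).

Lemma exp_score_grad r' r :
  dens r' -> dens r -> exp_score s Y M r' r = score_grad r' r.
Proof.
move=> dr' dr; rewrite /exp_score sum_mule_lexe; last first.
  by move=> y yY; apply: hip_psd_ge0; [exact: (QS dr').2.1 | exact: dr.1].
rewrite /score_grad /score_observable !hip_suml; congr lexe.
by apply: eq_bigr => y _; rewrite hipZl.
Qed.

Hypothesis REG : regular_score s Y M.

Lemma infinite_effects0 r' : dens r' ->
  hip (ninf_effect r') r' = 0 /\ hip (pinf_effect r') r' = 0.
Proof.
move=> dr'; have := REG dr'.
by rewrite exp_score_grad // lexe_fin_num => /andP[/eqP-> /eqP->].
Qed.

Lemma score_valueE r' : dens r' -> score_value r' = hip (score_observable r') r'.
Proof.
move=> dr'; rewrite /score_value exp_score_grad // /score_grad.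
by have [-> ->] := infinite_effects0 dr'; rewrite lexe00.
Qed.

Lemma exp_score_diag r : dens r -> exp_score s Y M r r = (score_value r)%:E.
Proof. by move=> dr; rewrite fineK //; exact: REG. Qed.

Lemma score_grad_represents : represents s Y M score_value score_grad.
Proof.
move=> r r' dr dr'; rewrite exp_score_grad // /score_grad !hipBr.
have [-> ->] := infinite_effects0 dr'.
by rewrite !subr0 score_valueE // -lexeDr addrC subrK.
Qed.

Lemma score_grad_selection :
  truthful s Y M -> subgrad_selection score_value score_grad.
Proof.
move=> TR; split=> [r' dr'|x z dx dz gradE].
- split=> [|x dx]; first exact: lexe_hip_ext_linear.
  by rewrite -score_grad_represents // -exp_score_diag //; exact: TR.
- by have := TR z x dz dx; rewrite score_grad_represents // gradE addey // exp_score_diag.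
Qed.

End ScoreSubgradient.

Unset Implicit Arguments.

Theorem theorem3p1 (R : realType) (n : nat)
    (s : 'M[R[i]]_n -> nat -> \bar R) (Y : 'M[R[i]]_n -> seq nat)
    (M : 'M[R[i]]_n -> nat -> 'M[R[i]]_n) :
  quantum_score Y M ->
  regular_score s Y M ->
  (truthful s Y M <->
     exists (F : 'M[R[i]]_n -> R) (d : 'M[R[i]]_n -> 'M[R[i]]_n -> \bar R),
       convex_on_dens F /\ subgrad_selection F d /\ represents s Y M F d) /\
  (strictly_truthful s Y M <->
     exists (F : 'M[R[i]]_n -> R) (d : 'M[R[i]]_n -> 'M[R[i]]_n -> \bar R),
       strictly_convex_on_dens F /\ subgrad_selection F d /\ represents s Y M F d).
Proof.
move=> QS REG; have rep := score_grad_represents QS REG.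
split; split.
- move=> TR; have sel := score_grad_selection QS REG TR.
  exists (score_value s Y M), (score_grad s Y M); split=> //.
  exact: subgrad_selection_convex sel.
- by case=> F [d [_ [sel repF]]]; exact: represents_truthful sel repF.
- move=> ST; have sel := score_grad_selection QS REG (strictly_truthful_truthful ST).
  exists (score_value s Y M), (score_grad s Y M); split=> //.
  apply: (strict_subgrad_strictly_convex sel).
  by rewrite -(represents_strictly_truthful sel rep).
- case=> F [d [sc [sel repF]]]; rewrite (represents_strictly_truthful sel repF).
  exact: strictly_convex_strict_subgrad.
Qed.
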